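(* (a) If $\pi\in\mathfrak{S}_{2n+1}$ is a down-up permutation, then every inversion of $\pi$ is admissible, i.e. $\mathsf{adi}\,\pi=\mathsf{inv}\,\pi$. (b) For every $n\ge0$ and every $\pi\in\widetilde{\mathfrak{S}}_{2n+1,n}(213)$, $$\mathsf{adi}\,\pi+\mathsf{adi}\,\pi^r=2n^2+n,\qquad \mathsf{adi}\,\pi=2\cdot(3\text{-}12)\pi,\qquad \mathsf{adi}\,\pi^r=(31\text{-}2)\pi.$$
   Context: A permutation $\pi\in\mathfrak{S}_m$ is down-up if $\pi(1)>\pi(2)<\pi(3)>\pi(4)<\cdots$ (descents and ascents alternate, starting with a descent). $\pi^r=\pi(m)\cdots\pi(1)$ is the reverse. $\mathsf{inv}\,\pi=\#\{i<j:\pi(i)>\pi(j)\}$. Admissible inversions: set $\pi(m+1)=0$; an inversion pair $(\pi(i),\pi(j))$ ($1\le i<j\le m$, $\pi(i)>\pi(j)$) is admissible if $\pi(j)<\pi(j+1)$ or there is $l$ with $i<l<j$ and $\pi(l)<\pi(j)$; $\mathsf{adi}\,\pi$ counts them. $(3\text{-}12)\pi=\#\{(i,j):i<j<m,\ \pi(j)<\pi(j+1)<\pi(i)\}$; $(31\text{-}2)\pi=\#\{(i,j):i+1<j\le m,\ \pi(i+1)<\pi(j)<\pi(i)\}$. $\mathsf{des}\,\pi=\#\{i\in[m-1]:\pi(i)>\pi(i+1)\}$; $\mathsf{dd}\,\pi$ is the number of $i\in[m]$ with $\pi(i-1)>\pi(i)>\pi(i+1)$ under the boundary convention $\pi(0)=\pi(m+1)=0$.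 $\widetilde{\mathfrak{S}}_{m,k}(213)=\{\pi\in\mathfrak{S}_m:\pi\text{ avoids }213,\ \mathsf{dd}\,\pi=0,\ \mathsf{des}\,\pi=k\}$. *)

From mathcomp Require Import all_boot all_order all_fingroup.
Set Implicit Arguments. Unset Strict Implicit. Unset Printing Implicit Defensive.

(* A permutation pi of [m] = {1..m} is encoded by s : 'S_m (acting on {0..m-1})
   via pi(i) = s(i-1) + 1 for 1 <= i <= m.  We extend with the paper's boundary
   convention pi(0) = pi(m+1) = 0 (and 0 elsewhere outside [1,m]). *)
Definition pv (m : nat) (s : 'S_m) (i : nat) : nat :=
  match i with
  | 0 => 0
  | k.+1 => match @insub nat (fun x => x < m) 'I_m k with
            | Some j => (val (s j)).+1
            | None => 0
            end
  end.

(* reverse: pi^r(i) = pi(m+1-i) *)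
Definition revp (m : nat) (s : 'S_m) : 'S_m := (perm (@rev_ord_inj m) * s)%g.

Definition down_up (m : nat) (s : 'S_m) : bool :=
  [forall i : 'I_m, (0 < i) ==>
     (if odd i then pv s i > pv s i.+1 else pv s i < pv s i.+1)].

Definition invnum (m : nat) (s : 'S_m) : nat :=
  \sum_(1 <= i < m.+1) \sum_(i.+1 <= j < m.+1) (pv s j < pv s i).

Definition adi (m : nat) (s : 'S_m) : nat :=
  \sum_(1 <= i < m.+1) \sum_(i.+1 <= j < m.+1)
    ((pv s j < pv s i) &&
     ((pv s j < pv s j.+1) || has (fun l => pv s l < pv s j) (iota i.+1 (j - i.+1)))).

Definition pat3_12 (m : nat) (s : 'S_m) : nat :=
  \sum_(1 <= i < m.+1) \sum_(i.+1 <= j < m)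
    ((pv s j < pv s j.+1) && (pv s j.+1 < pv s i)).

Definition pat31_2 (m : nat) (s : 'S_m) : nat :=
  \sum_(1 <= i < m.+1) \sum_(i.+2 <= j < m.+1)
    ((pv s i.+1 < pv s j) && (pv s j < pv s i)).

Definition des (m : nat) (s : 'S_m) : nat :=
  \sum_(1 <= i < m) (pv s i.+1 < pv s i).

Definition dd (m : nat) (s : 'S_m) : nat :=
  \sum_(1 <= i < m.+1) ((pv s i < pv s i.-1) && (pv s i.+1 < pv s i)).

Definition avoids213 (m : nat) (s : 'S_m) : bool :=
  [forall i : 'I_m, forall j : 'I_m, forall k : 'I_m,
     ~~ [&& i < j, j < k, s j < s i & s i < s k]].

Definition tS213 (m k : nat) (s : 'S_m) : bool :=
  [&& avoids213 s, dd s == 0 & des s == k].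

From mathcomp Require Import all_boot all_order all_fingroup zify.
Set Implicit Arguments. Unset Strict Implicit.

(* An inversion (i, j) of a down-up word is admissible: for even j the next
   letter is larger, and for odd j > i + 1 the letter at j - 1 is a smaller one
   between i and j (j = i + 1 would contradict the descent at i).

   For (b), dd = 0 forbids two consecutive descents and, since the last letter
   descends to the boundary 0, a descent at position 2n; with exactly n descents
   among 2n slots they must sit at the odd positions, so both pi and its reverse are down-up and adi = inv on both
   sides, whose sum is C(2n+1, 2).  Avoiding 213 makes the letter at an odd
   position larger than everything to its right, and places the two letters at
   positions j, j + 1 (j even) on the same side of any earlier letter.  Grouping
   the columns j, j + 1 gives inv = 2 (3-12); grouping the rows i, i + 1
   (i odd) gives inv + (31-2) = C(2n+1, 2), hence adi pi^r = (31-2). *)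

Lemma sum_no_consecutive n (d : nat -> bool) :
  (forall i, 0 < i < 2 * n -> ~~ (d i && d i.+1)) ->
  \sum_(1 <= i < (2 * n).+1) d i <= n.
Proof.
elim: n => [|n IH] no_adj; first by rewrite big_geq.
rewrite (_ : (2 * n.+1).+1 = (2 * n).+3); last lia.
rewrite big_nat_recr //= big_nat_recr //=.
have := no_adj (2 * n).+1; have := IH (fun i i_in => no_adj i ltac:(lia)).
case: (d _) (d _) => [] []; lia.
Qed.

Lemma alternation_forced n (d : nat -> bool) :
    (forall i, 0 < i < 2 * n -> ~~ (d i && d i.+1)) -> d (2 * n) = false ->
    \sum_(1 <= i < 2 * n + 1) d i = n ->
  forall i, 0 < i <= 2 * n -> d i = odd i.
Proof.
rewrite addn1; elim: n => [|n IH] no_adj d_last sum_n i i_in; first lia.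
have no_adj' i' : 0 < i' < 2 * n -> ~~ (d i' && d i'.+1) by move=> ?; apply: no_adj; lia.
move: sum_n; rewrite (_ : (2 * n.+1).+1 = (2 * n).+3); last lia.
rewrite big_nat_recr //= big_nat_recr //=.
rewrite (_ : (2 * n).+2 = 2 * n.+1) ?d_last ?addn0; last lia.
have := sum_no_consecutive no_adj'; case d_odd: (d (2 * n).+1) => /= bound sum_n; last lia.
have [i_le | i_gt] := leqP i (2 * n); last first.
  have [-> | ->] : i = (2 * n).+1 \/ i = 2 * n.+1 by lia.
    by rewrite d_odd /= oddM.
  by rewrite d_last oddM.
apply: IH => //; [|lia..].
by apply/negbTE; have := no_adj (2 * n); rewrite d_odd andbT; apply; lia.
Qed.

Lemma sum_nat_pairs a L (F : nat -> nat) :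
  \sum_(a <= j < a + 2 * L) F j = \sum_(k < L) (F (a + 2 * k) + F (a + 2 * k).+1).
Proof.
elim: L => [|L IH]; first by rewrite big_ord0 big_geq ?addn0.
rewrite big_ord_recr /= -IH (_ : a + 2 * L.+1 = (a + 2 * L).+2); last lia.
by rewrite big_nat_recr ?big_nat_recr /= ?addnA //; lia.
Qed.

Lemma sum_nat_odd_pairs m (F : nat -> nat) : odd m ->
  \sum_(1 <= i < m.+1) F i = \sum_(k < m./2) (F (1 + 2 * k) + F (1 + 2 * k).+1) + F m.
Proof.
move=> m_odd; have m_eq : 1 + 2 * m./2 = m.
  by have := odd_double_half m; rewrite m_odd; lia.
by rewrite -sum_nat_pairs m_eq big_nat_recr //; lia.
Qed.

Lemma sum_subn_bin2 m : \sum_(1 <= i < m.+1) (m - i) = 'C(m, 2).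
Proof.
elim: m => [|m IH]; first by rewrite big_geq.
by rewrite big_nat_recl // subn1 binS bin1 /= addnC -IH.
Qed.

Lemma bin2_odd n : 'C(2 * n + 1, 2) = 2 * n ^ 2 + n.
Proof. by rewrite bin2 addn1 /= mulnCA mul2n doubleK; lia. Qed.

Lemma sum_upper_triangleE m (F : nat -> nat -> nat) :
  \sum_(1 <= i < m.+1) \sum_(i.+1 <= j < m.+1) F i j =
  \sum_(1 <= i < m.+1) \sum_(1 <= j < m.+1) (i < j) * F i j.
Proof.
apply: eq_big_nat => i /andP[i_gt0 i_le].
rewrite [RHS](@big_cat_nat _ _ _ i.+1) //=.
have -> : \sum_(1 <= j < i.+1) (i < j) * F i j = 0.
  by rewrite big_nat big1 // => j /andP[_ j_le]; rewrite ltnNge -ltnS j_le.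
by rewrite add0n; apply: eq_big_nat => j /andP[-> _]; rewrite mul1n.
Qed.

Lemma sum_upper_triangle_rev m (F : nat -> nat -> nat) :
  \sum_(1 <= i < m.+1) \sum_(i.+1 <= j < m.+1) F (m.+1 - i) (m.+1 - j) =
  \sum_(1 <= i < m.+1) \sum_(i.+1 <= j < m.+1) F j i.
Proof.
rewrite !sum_upper_triangleE exchange_big_nat big_nat_rev.
apply: eq_big_nat => j j_in; rewrite big_nat_rev; apply: eq_big_nat => i i_in.
by congr (_ * F _ _); lia.
Qed.

(* Keeps [/=] from unfolding [pv s i.+1] into its [insub] match. *)
Arguments pv : simpl never.

Section PermutationWord.
Variables (m : nat) (s : 'S_m).
Local Notation w := (pv s).

Lemma pvS k (k_lt : k < m) : w k.+1 = (s (Ordinal k_lt)).+1.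
Proof. by rewrite /pv insubT /=; do 2 f_equal; apply: val_inj. Qed.

Lemma pv_out i : m < i -> w i = 0.
Proof. by case: i => [//|k] k_ge; rewrite /pv insubF // ltnNge -ltnS k_ge. Qed.

Lemma pv_gt0 i : 0 < i <= m -> 0 < w i.
Proof. by case: i => [//|k] /andP[_ k_lt]; rewrite (pvS k_lt). Qed.

Lemma pv_inj i j : 0 < i <= m -> 0 < j <= m -> w i = w j -> i = j.
Proof.
case: i => [//|i] /andP[_ i_lt]; case: j => [//|j] /andP[_ j_lt].
by rewrite (pvS i_lt) (pvS j_lt) => -[/val_inj/perm_inj[->]].
Qed.

Lemma down_upP :
  reflect (forall i, 0 < i < m -> if odd i then w i.+1 < w i else w i < w i.+1)
          (down_up s).
Proof.
apply: (iffP forallP) => [du i /andP[i_gt0 i_lt] | du i].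
  by have := du (Ordinal i_lt); rewrite /= i_gt0.
by apply/implyP => i_gt0; apply: du; rewrite i_gt0 ltn_ord.
Qed.

Lemma avoids213_pv : avoids213 s ->
  forall i j k, 0 < i -> i < j -> j < k -> k <= m -> ~~ ((w j < w i) && (w i < w k)).
Proof.
move=> /forallP av [//|i] [//|j] [//|k] _ ij jk k_le.
have i_lt : i < m by lia. have j_lt : j < m by lia. have k_lt : k < m by lia.
rewrite (pvS i_lt) (pvS j_lt) (pvS k_lt) !ltnS.
move: (av (Ordinal i_lt)) => /forallP /(_ (Ordinal j_lt)) /forallP /(_ (Ordinal k_lt)).
by move: ij jk; rewrite /= !ltnS => -> ->.
Qed.

Lemma dd_eq0_pv : dd s = 0 ->
  forall i, 0 < i <= m -> ~~ ((w i < w i.-1) && (w i.+1 < w i)).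
Proof.
move=> /eqP; rewrite /dd sum_nat_seq_eq0 => /allP dd0 i i_in.
by apply/negP => desc2; have := dd0 i; rewrite mem_index_iota ltnS i_in desc2 => /(_ isT).
Qed.
End PermutationWord.

Lemma pv_revp m (s : 'S_m) i : 0 < i <= m -> pv (revp s) i = pv s (m.+1 - i).
Proof.
case: i => [//|k] /andP[_ k_lt]; rewrite (pvS (revp s) k_lt) /revp permM permE.
have k'_lt : m - k.+1 < m by lia.
rewrite subSS -subnSK // (pvS s k'_lt); do 2 f_equal; congr (s _); exact: val_inj.
Qed.

Lemma invnum_add_revp m (s : 'S_m) : invnum s + invnum (revp s) = 'C(m, 2).
Proof.
have -> : invnum (revp s) =
    \sum_(1 <= i < m.+1) \sum_(i.+1 <= j < m.+1) (pv s i < pv s j).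
  apply: etrans (sum_upper_triangle_rev m (fun a b => pv s b < pv s a)).
  apply: eq_big_nat => i i_in; apply: eq_big_nat => j j_in; rewrite !pv_revp //; lia.
rewrite /invnum -big_split -(sum_subn_bin2 m); apply: eq_big_nat => i i_in.
rewrite -big_split (eq_big_nat _ _ (F2 := fun=> 1)) ?sum_nat_const_nat ?muln1 // => j j_in.
have : pv s j != pv s i by apply/eqP => /pv_inj; lia.
by case: ltngtP.
Qed.

Lemma dd_des_down_up n (s : 'S_(2 * n + 1)) : dd s = 0 -> des s = n -> down_up s.
Proof.
move=> /dd_eq0_pv no_dd des_n.
have no_dd2 i : 0 < i < 2 * n -> ~~ ((pv s i.+1 < pv s i) && (pv s i.+2 < pv s i.+1)).
  by move=> i_in; apply: no_dd; lia.
have last_no_desc : (pv s (2 * n).+1 < pv s (2 * n)) = false.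
  apply/negbTE; have := no_dd (2 * n).+1.
  by rewrite (pv_out s (i := (2 * n).+2)) ?pv_gt0 ?andbT; [apply; lia | lia..].
have alt := alternation_forced no_dd2 last_no_desc des_n.
apply/down_upP => i i_in; rewrite -(alt i); last lia.
case: ltnP => // desc; rewrite ltn_neqAle desc andbT; apply/eqP => /pv_inj; lia.
Qed.

Section DownUp.
Variables (m : nat) (s : 'S_m).
Hypotheses (m_odd : odd m) (s_du : down_up s).
Local Notation w := (pv s).

Lemma even_ltn i : ~~ odd i -> i <= m -> i < m.
Proof.
by move=> i_even; rewrite leq_eqVlt => /predU1P[i_eq | //]; rewrite i_eq m_odd in i_even.
Qed.

Lemma down_up_ascent i : 0 < i < m -> ~~ odd i -> w i < w i.+1.
Proof.
by move=> i_in /negbTE i_even; move/down_upP: s_du => /(_ i i_in); rewrite i_even.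
Qed.

Lemma down_up_no_ascent i : 0 < i <= m -> odd i -> (w i < w i.+1) = false.
Proof.
move=> /andP[i_gt0 i_le] i_odd; have [i_lt | i_ge] := ltnP i m; last first.
  by rewrite (pv_out s (i := i.+1)) ?ltn0 // ltnS.
move/down_upP: s_du => /(_ i); rewrite i_gt0 i_lt i_odd => /(_ isT) desc.
by rewrite ltnNge ltnW.
Qed.

Lemma down_up_admissible i j : 0 < i -> i < j <= m -> w j < w i ->
  (w j < w j.+1) || has (fun l => w l < w j) (iota i.+1 (j - i.+1)).
Proof.
move=> i_gt0 /andP[ij j_le] inv_ij.
have [j_odd | j_even] := boolP (odd j); last first.
  by rewrite (@down_up_ascent j) // even_ltn // andbT; exact: leq_trans ij.
case: j j_odd ij j_le inv_ij => [//|k] /= k_even ik k_le inv_ik.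
have asc : w k < w k.+1 by apply: down_up_ascent => //; lia.
have {}ik : i < k.
  by rewrite ltn_neqAle -ltnS ik andbT; apply: contraTneq inv_ik => ->; rewrite -leqNgt ltnW.
by apply/orP; right; apply/hasP; exists k => //; rewrite mem_iota; lia.
Qed.

Lemma adi_down_up : adi s = invnum s.
Proof.
apply: eq_big_nat => i /andP[i_gt0 _]; apply: eq_big_nat => j /andP[ij j_le].
by case: ltnP => //= inv_ij; rewrite down_up_admissible // ij -ltnS.
Qed.

Lemma down_up_revp : down_up (revp s).
Proof.
apply/down_upP => i i_in; rewrite !pv_revp; try lia.
have k_in : 0 < m - i < m by lia.
move/down_upP: s_du => /(_ _ k_in).
rewrite (_ : m.+1 - i = (m - i).+1) ?subSS ?oddB ?m_odd; try lia.
by case: (odd i).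
Qed.

Section Avoids213.
Hypothesis s_av : avoids213 s.

Lemma odd_pos_gt_right i j : odd i -> 0 < i < j -> j <= m -> w j < w i.
Proof.
move=> i_odd /andP[i_gt0 ij] j_le.
have desc : w i.+1 < w i.
  by move/down_upP: s_du => /(_ i); rewrite i_gt0 i_odd /=; apply; lia.
have [ij1 | j_le1] := ltnP i.+1 j; last by have -> : j = i.+1 by lia.
have := avoids213_pv s_av i_gt0 (ltnSn i) ij1 j_le; rewrite desc andTb -leqNgt => wj_le.
rewrite ltn_neqAle wj_le andbT; apply/eqP => /pv_inj; lia.
Qed.

Lemma even_pair_lt i j : 0 < i <= j -> j < m -> ~~ odd j ->
  (w j < w i) = (w j.+1 < w i).
Proof.
move=> /andP[i_gt0 ij] j_lt j_even.
have asc : w j < w j.+1 by apply: down_up_ascent; lia.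
apply/idP/idP => [lt_j | lt_j1]; last exact: ltn_trans lt_j1.
have i_lt : i < j by rewrite ltn_neqAle ij andbT; apply: contraTneq lt_j => ->; rewrite ltnn.
have := avoids213_pv s_av i_gt0 i_lt (ltnSn j) j_lt; rewrite lt_j andTb -leqNgt => wi_le.
rewrite ltn_neqAle wi_le andbT; apply/eqP => /pv_inj; lia.
Qed.

Lemma inv_row_3_12 i a : 0 < i <= a -> ~~ odd a -> a <= m.+1 ->
  \sum_(a <= j < m.+1) (w j < w i) =
  2 * \sum_(a <= j < m.+1) ((w j < w j.+1) && (w j.+1 < w i)).
Proof.
move=> i_in a_even a_le.
have m_eq : m.+1 = a + 2 * (m.+1 - a)./2.
  have := odd_double_half (m.+1 - a); rewrite oddB //= m_odd (negbTE a_even) /=; lia.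
rewrite m_eq !sum_nat_pairs big_distrr; apply: eq_bigr => k _.
have j_even : ~~ odd (a + 2 * k) by rewrite oddD oddM (negbTE a_even).
have j1_odd : odd (a + 2 * k).+1 by rewrite oddS j_even.
have j_lt : a + 2 * k < m by move: (ltn_ord k); lia.
have j_in : 0 < a + 2 * k < m by lia.
have j1_in : 0 < (a + 2 * k).+1 <= m by lia.
have i_le : 0 < i <= a + 2 * k by lia.
rewrite (down_up_no_ascent j1_in j1_odd) (down_up_ascent j_in j_even).
by rewrite (even_pair_lt i_le j_lt j_even) andTb andFb addn0 addnn -mul2n.
Qed.

Lemma invnum_3_12 : invnum s = 2 * pat3_12 s.
Proof.
rewrite /invnum /pat3_12 big_distrr; apply: eq_big_nat => i /andP[i_gt0 i_le] /=.
have -> : \sum_(i.+1 <= j < m) ((w j < w j.+1) && (w j.+1 < w i)) =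
          \sum_(i.+1 <= j < m.+1) ((w j < w j.+1) && (w j.+1 < w i)).
  have [i_lt | i_ge] := ltnP i m; last by rewrite !big_geq //; lia.
  by rewrite big_nat_recr //= (pv_out s (i := m.+1)) // ltn0 addn0.
have [i_odd | i_even] := boolP (odd i).
  by apply: inv_row_3_12; rewrite ?i_gt0 //= i_odd.
have asc : w i < w i.+1 by apply: down_up_ascent; rewrite // i_gt0 even_ltn.
have no_desc : (w i.+1 < w i) = false by rewrite ltnNge ltnW.
have i_in : 0 < i <= i by rewrite i_gt0 leqnn.
move: (inv_row_3_12 i_in i_even (ltnW i_le)).
by rewrite !(big_ltn i_le) ltnn asc no_desc /= !add0n.
Qed.

Lemma pat31_2_add_invnum : pat31_2 s + invnum s = 'C(m, 2).
Proof.
rewrite -(sum_subn_bin2 m) /pat31_2 /invnum -big_split /= !sum_nat_odd_pairs //.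
rewrite !big_geq // subnn !addn0; apply: eq_bigr => k _.
have i_odd : odd (1 + 2 * k) by rewrite oddD oddM.
have i_lt : (1 + 2 * k).+1 < m.
  by move: (ltn_ord k); have := odd_double_half m; rewrite m_odd; lia.
set i := 1 + 2 * k in i_odd i_lt *.
have inv_odd : \sum_(i.+1 <= j < m.+1) (w j < w i) = m - i.
  rewrite (eq_big_nat _ _ (F2 := fun=> 1)) ?sum_nat_const_nat ?muln1 //.
  by move=> j /andP[ij j_le]; rewrite odd_pos_gt_right // /i.
have pat_even : \sum_(i.+3 <= j < m.+1) ((w i.+2 < w j) && (w j < w i.+1)) = 0.
  have asc : w i.+1 < w i.+2 by apply: down_up_ascent; rewrite ?i_lt ?oddS ?negbK.
  rewrite big_nat big1 // => j _.
  by case: ltnP => // /(ltn_trans asc)/ltnW; rewrite leqNgt => /negbTE->.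
have pat_odd : \sum_(i.+2 <= j < m.+1) ((w i.+1 < w j) && (w j < w i)) +
               \sum_(i.+2 <= j < m.+1) (w j < w i.+1) = m - i.+1.
  rewrite -big_split (eq_big_nat _ _ (F2 := fun=> 1)) ?sum_nat_const_nat ?muln1 //=.
  move=> j /andP[ij j_le]; rewrite (odd_pos_gt_right (i := i) (j := j)) //; last first.
    by rewrite /i; lia.
  have : w i.+1 != w j by apply/eqP => /pv_inj; lia.
  by rewrite andbT; case: ltngtP.
lia.
Qed.

End Avoids213.

End DownUp.

Theorem lemma3p9 :
  (forall (n : nat) (s : 'S_(2 * n + 1)), down_up s -> adi s = invnum s) /\
  (forall (n : nat) (s : 'S_(2 * n + 1)), tS213 n s ->
     [/\ adi s + adi (revp s) = 2 * n ^ 2 + n,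
         adi s = 2 * pat3_12 s
       & adi (revp s) = pat31_2 s]).
Proof.
have odd_m n : odd (2 * n + 1) by rewrite oddD oddM.
split=> [n s | n s /and3P[s_av /eqP dd0 /eqP des_n]]; first exact: adi_down_up.
have s_du := dd_des_down_up dd0 des_n.
rewrite !adi_down_up ?down_up_revp // -bin2_odd.
have inv_rev := invnum_add_revp s.
have inv_31_2 := pat31_2_add_invnum (odd_m n) s_du s_av.
split; [exact: inv_rev | exact: invnum_3_12 | lia].
Qed.
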